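(* Let $\lambda=(\lambda_1,\dots,\lambda_I)$, $\mu=(\mu_1,\dots,\mu_J)$ be partitions of $n$ and $(T_t)_{t\ge0}$ the random transpositions Markov chain on $\mathcal{T}_{\lambda,\mu}$ with transition matrix $P$. For every positive integer $m$, every cell $(i,j)$ and every $\mathbf{x}\in\mathcal{T}_{\lambda,\mu}$, \[ \mathbb{E}[T_{t+1}(i,j)^m\mid T_t=\mathbf{x}]=x_{ij}^m\left(1-\frac{2m(n+1-m)}{n^2}\right)+(\text{a polynomial in the entries of }\mathbf{x}\text{ of degree}<m). \] Consequently, the eigenfunctions of $P$ are polynomials in the table entries.
   Context: $\mathcal{T}_{\lambda,\mu}$ is the set of $I\times J$ nonnegative integer tables with row sums $\lambda_i$ and column sums $\mu_j$; $T_t(i,j)$ is the $(i,j)$ entry at time $t$. The random transpositions chain: for $T'$ obtained from $T$ by subtracting $1$ at cells $(i_1,j_1),(i_2,j_2)$ and adding $1$ at $(i_1,j_2),(i_2,j_1)$ (with $i_1\ne i_2$, $j_1\ne j_2$), $P(T,T')=2T_{i_1j_1}T_{i_2j_2}/n^2$; $P(T,T)$ is the remaining mass. Its stationary distribution is the Fisher–Yates distribution $\pi_{\lambda,\mu}(T)=\frac1{n!}\prod_{i,j}\frac{\lambda_i!\mu_j!}{T_{ij}!}$. *)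

From HB Require Import structures.
From mathcomp Require Import all_boot all_order all_algebra.
From mathcomp Require Export mpoly.
Set Implicit Arguments. Unset Strict Implicit. Unset Printing Implicit Defensive.
Import Order.TTheory GRing.Theory Num.Theory.
Local Open Scope ring_scope.

Definition is_partition (n : nat) (lam : seq nat) : bool :=
  [&& sorted geq lam, all (fun k => 0 < k)%N lam & sumn lam == n].

Notation cell lam mu := ('I_(size lam) * 'I_(size mu))%type.

(* Tables with entries in {0,..,n} (every table of T_{lam,mu} has entries <= n). *)
Definition table (n : nat) (lam mu : seq nat) := {ffun cell lam mu -> 'I_n.+1}.

Definition tables (n : nat) (lam mu : seq nat) : {set table n lam mu} :=
  [set T : table n lam mu |
     [forall i : 'I_(size lam), (\sum_(j : 'I_(size mu)) (T (i, j) : nat))%N == nth 0%N lam i]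
  && [forall j : 'I_(size mu), (\sum_(i : 'I_(size lam)) (T (i, j) : nat))%N == nth 0%N mu j]].

(* T' is obtained from T by subtracting 1 at (i1,j1),(i2,j2) and adding 1 at
   (i1,j2),(i2,j1) (stated without truncated subtraction). *)
Definition is_move n lam mu (T T' : table n lam mu)
    (i1 i2 : 'I_(size lam)) (j1 j2 : 'I_(size mu)) : bool :=
  [forall c : cell lam mu,
     ((T' c : nat) + ((c == (i1, j1)) : nat) + ((c == (i2, j2)) : nat)
      == (T c : nat) + ((c == (i1, j2)) : nat) + ((c == (i2, j1)) : nat))%N].

Section Chain.
Variable R : realFieldType.

(* The unordered pair of cells
   {(i1,j1),(i2,j2)} (with i1 <> i2, j1 <> j2) is enumerated exactly once by
   requiring i1 < i2; distinct such pairs give distinct T', so at most one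
   term of the sum is nonzero, and it equals 2 T_{i1j1} T_{i2j2} / n^2. *)
Definition Poff n lam mu (T T' : table n lam mu) : R :=
  \sum_(i1 : 'I_(size lam)) \sum_(i2 : 'I_(size lam)) \sum_(j1 : 'I_(size mu)) \sum_(j2 : 'I_(size mu))
    if [&& (i1 < i2)%N, j1 != j2 & is_move T T' i1 i2 j1 j2]
    then 2 * (T (i1, j1) : nat)%:R * (T (i2, j2) : nat)%:R / (n%:R ^+ 2)
    else 0.

Definition Ptrans n lam mu (T T' : table n lam mu) : R :=
  if T' == T then 1 - \sum_(U in tables n lam mu | U != T) Poff T U
  else Poff T T'.

(* (P f)(x) = E[f(T_{t+1}) | T_t = x]. *)
Definition Papply n lam mu (f : table n lam mu -> R) (x : table n lam mu) : R :=
  \sum_(T' in tables n lam mu) Ptrans x T' * f T'.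

(* Variables of the polynomial ring: one per cell, indexed via enum_rank. *)
Definition nvars (lam mu : seq nat) := #|{: cell lam mu}|.

Definition entries n lam mu (x : table n lam mu) : 'I_(nvars lam mu) -> R :=
  fun k => (x (enum_val k) : nat)%:R.

End Chain.

Arguments Poff {R n lam mu} T T'.
Arguments Ptrans {R n lam mu} T T'.
Arguments Papply {R n lam mu} f x.
Arguments entries {R n lam mu} x k.

From HB Require Import structures.
From mathcomp Require Import all_boot all_order all_algebra.
From mathcomp Require Import mpoly.
From mathcomp Require Import ring zify.
Import Order.TTheory GRing.Theory Num.Theory.
Set Implicit Arguments. Unset Strict Implicit. Unset Printing Implicit Defensive.
Local Open Scope ring_scope.

(* A move of the chain changes the entry a = x_ij by +1 when (i, j) is one of the
   two cells receiving a unit, by -1 when it is one of the two cells losing one,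
   and leaves it unchanged otherwise.  Summing the weights 2 x_{i1 j1} x_{i2 j2} / n^2
   over all moves and using the row and column sums r = lam_i, c = mu_j gives
     E[T_{t+1}(i,j)^m | x] - a^m
       = 2/n^2 [(r - a)(c - a)((a + 1)^m - a^m) + a (n - r - c + a)((a - 1)^m - a^m)],
   a polynomial in a whose a^(m+1) terms cancel and whose a^m coefficient is
   -2 m (n + 1 - m) / n^2.  The statement on eigenfunctions holds because every
   function on the finite state space is interpolated by a polynomial. *)

Section DriftPolynomial.
Variable R : comNzRingType.
Implicit Types (c : R) (m k s : nat).

Lemma coef_XaddC_exp c m k : (('X + c%:P) ^+ m)`_k = c ^+ (m - k) *+ 'C(m, k).
Proof.
rewrite addrC exprDn coef_sum.
under eq_bigr => i _ do rewrite coefMn -polyC_exp coefCM coefXn.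
have [km | mk] := ltnP k m.+1; last first.
  rewrite bin_small // mulr0n big1 // => i _.
  by rewrite (gtn_eqF (leq_trans (ltn_ord i) mk)) mulr0 mul0rn.
rewrite (bigD1 (Ordinal km)) //= eqxx mulr1 big1 ?addr0 // => i ne.
by move: ne; rewrite -val_eqE eq_sym => /negbTE ->; rewrite mulr0 mul0rn.
Qed.

Lemma coef_XnM_XaddC_exp_subXn c m k s :
  ('X^k * (('X + c%:P) ^+ m - 'X^m))`_(m + s)
    = if (s < k)%N then c ^+ (k - s) *+ 'C(m, k - s) else 0.
Proof.
rewrite coefXnM coefB coef_XaddC_exp coefXn.
have [msk | kms] := ltnP (m + s) k.
  by rewrite (leq_ltn_trans (leq_addl m s) msk) bin_small //; lia.
have [sk | ks] := ltnP s k.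
  have lt_m : (m + s - k < m)%N by lia.
  rewrite (ltn_eqF lt_m) subr0 -bin_sub ?(ltnW lt_m) //.
  by congr (_ ^+ _ *+ 'C(m, _)); lia.
have [-> | ne] := eqVneq (m + s - k)%N m; first by rewrite subnn binn subrr.
by rewrite bin_small ?subr0 //; lia.
Qed.

Lemma natr_bin2 m : 'C(m, 2)%:R *+ 2 = m%:R * (m%:R - 1) :> R.
Proof.
case: m => [|m]; first by rewrite bin_small // mul0rn mul0r.
by rewrite -mulr_natr -natrM mulnC -(mul_bin_diag m.+1 1) bin1 natrM -natr1 addrK.
Qed.

(* Up to the factor 2 / N^2, (l - X)(u - X) and X (N - l - u + X) are the total
   weights of the moves raising, resp. lowering, an entry X with row sum l and
   column sum u in a table of total N. *)
Definition drift_poly (N l u : R) m : {poly R} :=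
  (l%:P - 'X) * (u%:P - 'X) * (('X + 1%:P) ^+ m - 'X^m)
  + 'X * ((N - l - u)%:P + 'X) * (('X - 1%:P) ^+ m - 'X^m)
  + (m%:R * (N + 1 - m%:R))%:P * 'X^m.

(* The coefficients of X^(m+1) and X^m vanish: m - m = 0 and
   2 'C(m, 2) - N m + m (N + 1 - m) = 0. *)
Lemma size_drift_poly N l u m : (size (drift_poly N l u m) <= m)%N.
Proof.
have -> : drift_poly N l u m =
    'X^0 * (('X + 1%:P) ^+ m - 'X^m) * (l * u)%:P
    - 'X^1 * (('X + 1%:P) ^+ m - 'X^m) * (l + u)%:P
    + 'X^1 * (('X + (-1)%:P) ^+ m - 'X^m) * (N - l - u)%:P
    + ('X^2 * (('X + 1%:P) ^+ m - 'X^m) + 'X^2 * (('X + (-1)%:P) ^+ m - 'X^m))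
    + 'X^m * (m%:R * (N + 1 - m%:R))%:P.
  by rewrite /drift_poly polyCN; ring.
apply/leq_sizeP => j /subnKC <-.
rewrite !coefD !coefN !coefMC !coef_XnM_XaddC_exp_subXn coefXn.
case: (_ - _)%N => [|[|s]] /=.
- rewrite addn0 eqxx !subn0 expr1n !expr1 sqrrN expr1n bin1 mulNrn -mulr2n natr_bin2.
  by rewrite mul1r; ring.
- by rewrite -[X in _ == X]addn0 eqn_add2l subSS subn0 !expr1 mulNrn subrr !mul0r; ring.
- by rewrite -[X in _ == X]addn0 eqn_add2l !mul0r; ring.
Qed.

Lemma horner_drift_poly N l u m a : (drift_poly N l u m).[a] =
  (l - a) * (u - a) * ((a + 1) ^+ m - a ^+ m)
  + a * (N - l - u + a) * ((a - 1) ^+ m - a ^+ m)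
  + m%:R * (N + 1 - m%:R) * a ^+ m.
Proof. by rewrite /drift_poly !hornerE. Qed.

End DriftPolynomial.

Section UnivariateMpoly.
Variables (R : comNzRingType) (nv : nat) (k : 'I_nv).

Definition mpoly_of_poly (p : {poly R}) : {mpoly R[nv]} :=
  \sum_(i < size p) p`_i *: 'X_k ^+ i.

Lemma msize_mpoly_of_poly p : (msize (mpoly_of_poly p) <= size p)%N.
Proof.
apply: leq_trans (msize_sum _ _ _) _; apply/bigmax_leqP => i _.
apply: leq_trans (msizeZ_le _ _) _.
by rewrite mpolyXn msizeX mdegMn mdeg1 mul1n.
Qed.

Lemma meval_mpoly_of_poly p v : (mpoly_of_poly p).@[v] = p.[v k].
Proof.
rewrite horner_coef raddf_sum; apply: eq_bigr => i _.
by rewrite /= mevalZ rmorphXn /= mevalXU.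
Qed.

End UnivariateMpoly.

Section Interpolation.
Variables (R : fieldType) (nv : nat) (D : finType) (pt : D -> 'I_nv -> R).
Hypothesis pt_inj : forall d e, pt d =1 pt e -> d = e.

Definition separating_factor (d e : D) : {mpoly R[nv]} :=
  if [pick k | pt d k != pt e k] is Some k
  then ('X_k - (pt e k)%:MP) * ((pt d k - pt e k)^-1)%:MP else 1.

Lemma meval_separating_factor_self d e : (separating_factor d e).@[pt d] = 1.
Proof.
rewrite /separating_factor; case: pickP => [k ne | _]; last exact: meval1.
by rewrite mevalM mevalB mevalXU !mevalC mulfV // subr_eq0.
Qed.

Lemma meval_separating_factor_other d e : d != e -> (separating_factor d e).@[pt e] = 0.
Proof.
move=> ne; rewrite /separating_factor; case: pickP => [k _ | same].
  by rewrite mevalM mevalB mevalXU mevalC subrr mul0r.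
by case/eqP: ne; apply: pt_inj => k; apply/eqP/negbFE/same.
Qed.

Definition lagrange_mpoly d := \prod_(e | e != d) separating_factor d e.

Lemma meval_lagrange_mpoly d e : (lagrange_mpoly d).@[pt e] = (e == d)%:R.
Proof.
rewrite /lagrange_mpoly rmorph_prod /=; have [-> | ne] := eqVneq e d.
  by apply: big1 => e' _; exact: meval_separating_factor_self.
by rewrite (bigD1 e) //= meval_separating_factor_other 1?eq_sym // mul0r.
Qed.

Lemma mpoly_interpolation (f : D -> R) : exists p : {mpoly R[nv]}, forall d, p.@[pt d] = f d.
Proof.
exists (\sum_d f d *: lagrange_mpoly d) => d.
rewrite raddf_sum (bigD1 d) //= mevalZ meval_lagrange_mpoly eqxx mulr1 big1 ?addr0 // => e ne.
by rewrite mevalZ meval_lagrange_mpoly eq_sym (negbTE ne) mulr0.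
Qed.

End Interpolation.

Lemma indicator_step_exp (R : comNzRingType) (a : R) m (p q s t : bool) :
  ~~ (p && q) -> ~~ (s && t) ->
  (a + (p && t)%:R + (q && s)%:R - (p && s)%:R - (q && t)%:R) ^+ m - a ^+ m
  = ((p && t)%:R + (q && s)%:R) * ((a + 1) ^+ m - a ^+ m)
    + ((p && s)%:R + (q && t)%:R) * ((a - 1) ^+ m - a ^+ m).
Proof.
by case: p q s t => [] [] [] [] //= _ _;
  rewrite ?(addr0, subr0, add0r, mul0r, mul1r, subrr).
Qed.

Lemma indicator_step_nat (v N : nat) (p q s t : bool) :
  ~~ (p && q) -> ~~ (s && t) -> (v <= N)%N ->
  (p && s || q && t -> 0 < v)%N -> (p && t || q && s -> v < N)%N ->
  (v + (p && t) + (q && s) - (p && s) - (q && t) <= N)%N /\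
  (v + (p && t) + (q && s) - (p && s) - (q && t) + (p && s) + (q && t)
   = v + (p && t) + (q && s))%N.
Proof.
case: p q s t => [] [] [] [] //= _ _ vN pos lt;
  try have := pos isT; try have := lt isT; lia.
Qed.

Lemma sum_except (R : zmodType) (T : finType) (t : T) (F : T -> R) :
  \sum_(u | u != t) F u = \sum_u F u - F t.
Proof. by rewrite [X in _ = X - _](bigD1 t) //= addrC addrK. Qed.

Section CellPairs.
Variables (R : comNzRingType) (a b : nat).
Implicit Types (F G : 'I_a -> 'I_a -> 'I_b -> 'I_b -> R) (X : 'I_a * 'I_b -> R).

Definition sum_cell_pairs F : R :=
  \sum_(i1 < a) \sum_(i2 < a) \sum_(j1 < b) \sum_(j2 < b)
    if (i1 != i2) && (j1 != j2) then F i1 i2 j1 j2 else 0.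

Lemma sum_cell_pairs_lin (A B : R) F G :
  sum_cell_pairs (fun i1 i2 j1 j2 => A * F i1 i2 j1 j2 + B * G i1 i2 j1 j2)
  = A * sum_cell_pairs F + B * sum_cell_pairs G.
Proof.
rewrite /sum_cell_pairs !mulr_sumr -big_split; apply: eq_bigr => i1 _.
rewrite !mulr_sumr -big_split; apply: eq_bigr => i2 _.
rewrite !mulr_sumr -big_split; apply: eq_bigr => j1 _.
rewrite !mulr_sumr -big_split; apply: eq_bigr => j2 _.
by case: (_ && _); rewrite /= ?mulr0 ?addr0.
Qed.

Lemma sum_cell_pairs_sym F G :
  (forall (i1 i2 : 'I_a) (j1 j2 : 'I_b), (i1 < i2)%N -> j1 != j2 ->
     G i1 i2 j1 j2 = F i1 i2 j1 j2 + F i2 i1 j2 j1) ->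
  \sum_(i1 < a) \sum_(i2 < a) \sum_(j1 < b) \sum_(j2 < b)
    (if (i1 < i2)%N && (j1 != j2) then G i1 i2 j1 j2 else 0)
  = sum_cell_pairs F.
Proof.
move=> GE.
have swap : \sum_(i1 < a) \sum_(i2 < a) \sum_(j1 < b) \sum_(j2 < b)
      (if (i1 < i2)%N && (j1 != j2) then F i2 i1 j2 j1 else 0)
    = \sum_(i1 < a) \sum_(i2 < a) \sum_(j1 < b) \sum_(j2 < b)
      (if (i2 < i1)%N && (j1 != j2) then F i1 i2 j1 j2 else 0).
  rewrite exchange_big; apply: eq_bigr => i1 _; apply: eq_bigr => i2 _.
  by rewrite exchange_big; apply: eq_bigr => j1 _; apply: eq_bigr => j2 _; rewrite eq_sym.
transitivity (\sum_(i1 < a) \sum_(i2 < a) \sum_(j1 < b) \sum_(j2 < b)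
      (if (i1 < i2)%N && (j1 != j2) then F i1 i2 j1 j2 else 0)
    + \sum_(i1 < a) \sum_(i2 < a) \sum_(j1 < b) \sum_(j2 < b)
      (if (i1 < i2)%N && (j1 != j2) then F i2 i1 j2 j1 else 0)).
  rewrite -big_split; apply: eq_bigr => i1 _; rewrite -big_split; apply: eq_bigr => i2 _.
  rewrite -big_split; apply: eq_bigr => j1 _; rewrite -big_split; apply: eq_bigr => j2 _.
  by case: ((i1 < i2)%N && _) / andP => [[lt12 ne12] | _]; [exact: GE | exact/esym/addr0].
rewrite swap -big_split; apply: eq_bigr => i1 _; rewrite -big_split; apply: eq_bigr => i2 _.
rewrite -big_split; apply: eq_bigr => j1 _; rewrite -big_split; apply: eq_bigr => j2 _.
case: (j1 != j2); rewrite ?andbF ?andbT /=; last exact: addr0.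
by rewrite -val_eqE /=; case: ltngtP; rewrite ?addr0 ?add0r.
Qed.

Lemma sum_cell_pairs_gain X i j :
  sum_cell_pairs (fun i1 i2 j1 j2 => X (i1, j1) * X (i2, j2) * ((i, j) == (i1, j2))%:R)
  = (\sum_(j' | j' != j) X (i, j')) * (\sum_(i' | i' != i) X (i', j)).
Proof.
rewrite /sum_cell_pairs (bigD1 i) //= [X in _ + X]big1 ?addr0 => [|i1 ne]; last first.
  apply: big1 => i2 _; apply: big1 => j1 _; apply: big1 => j2 _.
  by rewrite xpair_eqE [i == _]eq_sym (negbTE ne) mulr0 if_same.
rewrite exchange_big big_distrlr /= [RHS]big_mkcond; apply: eq_bigr => j1 _.
have [-> | ne] := eqVneq j1 j.
  apply: big1 => i2 _; apply: big1 => j2 _.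
  have [<- | ne2] := eqVneq j j2; first by rewrite eqxx andbF.
  by rewrite xpair_eqE (negbTE ne2) andbF mulr0 if_same.
rewrite /= [RHS]big_mkcond; apply: eq_bigr => i2 _.
rewrite (bigD1 j) //= [X in _ + X]big1 ?addr0 => [|j2 ne2]; last first.
  by rewrite xpair_eqE eqxx [j == _]eq_sym (negbTE ne2) mulr0 if_same.
by rewrite ne andbT eq_sym xpair_eqE !eqxx mulr1.
Qed.

Lemma sum_cell_pairs_loss X i j :
  sum_cell_pairs (fun i1 i2 j1 j2 => X (i1, j1) * X (i2, j2) * ((i, j) == (i1, j1))%:R)
  = X (i, j) * \sum_(i' | i' != i) \sum_(j' | j' != j) X (i', j').
Proof.
rewrite /sum_cell_pairs (bigD1 i) //= [X in _ + X]big1 ?addr0 => [|i1 ne]; last first.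
  apply: big1 => i2 _; apply: big1 => j1 _; apply: big1 => j2 _.
  by rewrite xpair_eqE [i == _]eq_sym (negbTE ne) mulr0 if_same.
rewrite mulr_sumr [RHS]big_mkcond; apply: eq_bigr => i2 _.
rewrite (bigD1 j) //= [X in _ + X]big1 ?addr0 => [|j1 ne1]; last first.
  by apply: big1 => j2 _; rewrite xpair_eqE eqxx [j == _]eq_sym (negbTE ne1) mulr0 if_same.
have [-> | ne2] := eqVneq i2 i; first by rewrite eqxx /= big1_eq.
rewrite /= mulr_sumr [RHS]big_mkcond; apply: eq_bigr => j2 _.
by rewrite eq_sym xpair_eqE !eqxx mulr1; case: (j2 != j).
Qed.

End CellPairs.

Lemma sum_eq_pair_row a b (r r0 : 'I_a) (c0 : 'I_b) :
  (\sum_(c < b) ((r, c) == (r0, c0)))%N = (r == r0).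
Proof.
rewrite (bigD1 c0) //= big1 ?addn0 => [|c /negbTE ne]; first by rewrite xpair_eqE eqxx andbT.
by rewrite xpair_eqE ne andbF.
Qed.

Lemma sum_eq_pair_col a b (c c0 : 'I_b) (r0 : 'I_a) :
  (\sum_(r < a) ((r, c) == (r0, c0)))%N = (c == c0).
Proof.
rewrite (bigD1 r0) //= big1 ?addn0 => [|r /negbTE ne]; first by rewrite xpair_eqE eqxx.
by rewrite xpair_eqE ne.
Qed.

Section Moves.
Variables (n : nat) (lam mu : seq nat).
Local Notation table := (table n lam mu).
Local Notation tables := (tables n lam mu).
Implicit Types (x U V : table) (i : 'I_(size lam)) (j : 'I_(size mu)).

Lemma tables_row_sum x i : x \in tables -> (\sum_j x (i, j))%N = nth 0 lam i.
Proof. by rewrite inE => /andP [/forallP /(_ i) /eqP]. Qed.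

Lemma tables_col_sum x j : x \in tables -> (\sum_i x (i, j))%N = nth 0 mu j.
Proof. by rewrite inE => /andP [_ /forallP /(_ j) /eqP]. Qed.

Lemma partition_sum_nth : is_partition n lam -> (\sum_(i < size lam) nth 0 lam i)%N = n.
Proof. by case/and3P => _ _ /eqP <-; rewrite sumnE (big_nth 0) big_mkord. Qed.

Lemma tables_row_pair_le x i j1 j2 : is_partition n lam -> x \in tables -> j1 != j2 ->
  (x (i, j1) + x (i, j2) <= n)%N.
Proof.
move=> /partition_sum_nth sum_n /(tables_row_sum i) row_i ne.
have row_le : (nth 0 lam i <= n)%N by rewrite -sum_n (bigD1 i) //= leq_addr.
apply: leq_trans row_le.
by rewrite -row_i (bigD1 j1) //= (bigD1 j2) 1?eq_sym //= addnA leq_addr.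
Qed.

Lemma is_moveP x U i1 i2 j1 j2 c : is_move x U i1 i2 j1 j2 ->
  (U c + (c == (i1, j1)) + (c == (i2, j2)) = x c + (c == (i1, j2)) + (c == (i2, j1)))%N.
Proof. by move/forallP/(_ c)/eqP. Qed.

Lemma is_move_entry (R : pzRingType) x U i1 i2 j1 j2 c : is_move x U i1 i2 j1 j2 ->
  (U c)%:R = (x c)%:R + (c == (i1, j2))%:R + (c == (i2, j1))%:R
             - (c == (i1, j1))%:R - (c == (i2, j2))%:R :> R.
Proof.
by move/(is_moveP c)/(congr1 (GRing.natmul (1 : R))); rewrite !natrD => <-; rewrite addrAC !addrK.
Qed.

Lemma is_move_inj x U V i1 i2 j1 j2 :
  is_move x U i1 i2 j1 j2 -> is_move x V i1 i2 j1 j2 -> U = V.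
Proof.
move=> mvU mvV; apply/ffunP => c; apply/val_inj/eqP.
by have /eqP := is_moveP c mvU; rewrite -(is_moveP c mvV) !eqn_add2r.
Qed.


Lemma is_move_tables x U i1 i2 j1 j2 :
  x \in tables -> is_move x U i1 i2 j1 j2 -> U \in tables.
Proof.
move=> xT mv; rewrite inE; apply/andP; split; apply/forallP.
  move=> r; rewrite -(tables_row_sum r xT).
  have : (\sum_j (U (r, j) + ((r, j) == (i1, j1)) + ((r, j) == (i2, j2)))
        = \sum_j (x (r, j) + ((r, j) == (i1, j2)) + ((r, j) == (i2, j1))))%N.
    by apply: eq_bigr => j _; exact: is_moveP.
  by rewrite !big_split /= !sum_eq_pair_row => /eqP; rewrite !eqn_add2r.
move=> s; rewrite -(tables_col_sum s xT).
have : (\sum_i (U (i, s) + ((i, s) == (i1, j1)) + ((i, s) == (i2, j2)))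
      = \sum_i (x (i, s) + ((i, s) == (i1, j2)) + ((i, s) == (i2, j1))))%N.
  by apply: eq_bigr => i _; exact: is_moveP.
by rewrite !big_split /= !sum_eq_pair_col [in RHS]addnAC => /eqP; rewrite !eqn_add2r.
Qed.

Lemma is_move_entry_exp (R : comNzRingType) x i j m U i1 i2 j1 j2 :
  i1 != i2 -> j1 != j2 -> is_move x U i1 i2 j1 j2 ->
  (U (i, j))%:R ^+ m - (x (i, j))%:R ^+ m
  = (((i, j) == (i1, j2))%:R + ((i, j) == (i2, j1))%:R)
      * (((x (i, j))%:R + 1) ^+ m - (x (i, j))%:R ^+ m)
    + (((i, j) == (i1, j1))%:R + ((i, j) == (i2, j2))%:R)
      * (((x (i, j))%:R - 1) ^+ m - (x (i, j))%:R ^+ m) :> R.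
Proof.
move=> ne_i ne_j /(is_move_entry R (i, j)) ->; rewrite !xpair_eqE indicator_step_exp //.
  by apply: contra ne_i => /andP [/eqP <- /eqP <-].
by apply: contra ne_j => /andP [/eqP <- /eqP <-].
Qed.

Definition move_table x i1 i2 j1 j2 : table := [ffun c =>
  inord (x c + (c == (i1, j2)) + (c == (i2, j1)) - (c == (i1, j1)) - (c == (i2, j2)))].

Lemma is_move_move_table x i1 i2 j1 j2 :
  is_partition n lam -> x \in tables -> i1 != i2 -> j1 != j2 ->
  (0 < x (i1, j1))%N -> (0 < x (i2, j2))%N ->
  is_move x (move_table x i1 i2 j1 j2) i1 i2 j1 j2.
Proof.
move=> part xT ne_i ne_j pos1 pos2; apply/forallP => -[i j]; rewrite ffunE !xpair_eqE.
have [] := @indicator_step_nat (x (i, j)) n (i == i1) (i == i2) (j == j1) (j == j2).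
- by apply: contra ne_i => /andP [/eqP <- /eqP <-].
- by apply: contra ne_j => /andP [/eqP <- /eqP <-].
- by rewrite -ltnS.
- by case/orP => /andP [/eqP -> /eqP ->].
- case/orP => /andP [/eqP -> /eqP ->].
    apply: leq_trans (tables_row_pair_le i1 part xT ne_j).
    by rewrite -{1}[x (i1, j2) : nat]add0n ltn_add2r.
  rewrite eq_sym in ne_j; apply: leq_trans (tables_row_pair_le i2 part xT ne_j).
  by rewrite -{1}[x (i2, j1) : nat]add0n ltn_add2r.
by move=> le_n step; rewrite inordK ?ltnS // step.
Qed.

End Moves.

Section Chain.
Variables (R : realFieldType) (n : nat) (lam mu : seq nat).
Local Notation table := (table n lam mu).
Local Notation tables := (tables n lam mu).
Implicit Types (f : table -> R) (x U : table) (i : 'I_(size lam)) (j : 'I_(size mu)).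

Lemma PapplyE f x : x \in tables ->
  Papply f x = f x + \sum_(U in tables) Poff x U * (f U - f x).
Proof.
move=> xT; rewrite /Papply (bigD1 x) //=.
have -> : \sum_(U in tables | U != x) Ptrans x U * f U
    = \sum_(U in tables | U != x) Poff x U * f U.
  by apply: eq_bigr => U /andP [_ /negbTE ne]; rewrite /Ptrans ne.
rewrite /Ptrans eqxx [X in _ = _ + X](bigD1 x) //= subrr mulr0 add0r.
under [X in _ = _ + X]eq_bigr do rewrite mulrBr.
by rewrite sumrB -mulr_suml; ring.
Qed.

Lemma sum_Poff_moves f x
    (g : 'I_(size lam) -> 'I_(size lam) -> 'I_(size mu) -> 'I_(size mu) -> R) :
  is_partition n lam -> x \in tables ->
  (forall U i1 i2 j1 j2, i1 != i2 -> j1 != j2 -> is_move x U i1 i2 j1 j2 ->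
     f U - f x = g i1 i2 j1 j2) ->
  \sum_(U in tables) Poff x U * (f U - f x)
  = \sum_(i1 : 'I_(size lam)) \sum_(i2 : 'I_(size lam))
      \sum_(j1 : 'I_(size mu)) \sum_(j2 : 'I_(size mu))
      if (i1 < i2)%N && (j1 != j2)
      then 2 * (x (i1, j1))%:R * (x (i2, j2))%:R / n%:R ^+ 2 * g i1 i2 j1 j2
      else 0.
Proof.
move=> part xT fE.
transitivity (\sum_(U in tables) \sum_(i1 : 'I_(size lam)) \sum_(i2 : 'I_(size lam))
    \sum_(j1 : 'I_(size mu)) \sum_(j2 : 'I_(size mu))
    if [&& (i1 < i2)%N, j1 != j2 & is_move x U i1 i2 j1 j2]
    then 2 * (x (i1, j1))%:R * (x (i2, j2))%:R / n%:R ^+ 2 * (f U - f x) else 0).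
  apply: eq_bigr => U _; rewrite mulr_suml; apply: eq_bigr => i1 _.
  rewrite mulr_suml; apply: eq_bigr => i2 _; rewrite mulr_suml; apply: eq_bigr => j1 _.
  by rewrite mulr_suml; apply: eq_bigr => j2 _; case: ifP; rewrite ?mul0r.
rewrite exchange_big; apply: eq_bigr => i1 _; rewrite exchange_big; apply: eq_bigr => i2 _.
rewrite exchange_big; apply: eq_bigr => j1 _; rewrite exchange_big; apply: eq_bigr => j2 _.
case: ifP => [/andP [lt_i ne_j] | not_move]; last first.
  by apply: big1 => U _; rewrite andbA not_move.
rewrite lt_i ne_j /=.
have ne_i : i1 != i2 by rewrite -val_eqE neq_ltn lt_i.
have [z1 | pos1] := posnP (x (i1, j1)).
  by rewrite z1 !(mulr0, mul0r) big1 // => U _; rewrite mul0r if_same.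
have [z2 | pos2] := posnP (x (i2, j2)).
  by rewrite z2 !(mulr0, mul0r) big1 // => U _; rewrite mul0r if_same.
have mv := is_move_move_table part xT ne_i ne_j pos1 pos2.
rewrite (bigD1 _ (is_move_tables xT mv)) /= mv (fE _ _ _ _ _ ne_i ne_j mv).
rewrite big1 ?addr0 // => U /andP [_ ne]; case: ifP => // /(is_move_inj mv) eqU.
by rewrite eqU eqxx in ne.
Qed.

Lemma Papply_entry_exp x i j m : is_partition n lam -> x \in tables ->
  let a := (x (i, j))%:R in let r := (nth 0%N lam i)%:R in let c := (nth 0%N mu j)%:R in
  Papply (fun T => (T (i, j))%:R ^+ m) x
  = a ^+ m + 2 / n%:R ^+ 2 * ((r - a) * (c - a) * ((a + 1) ^+ m - a ^+ m)
                             + a * (n%:R - r - c + a) * ((a - 1) ^+ m - a ^+ m)) :> R.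
Proof.
move=> part xT a r c; pose y (d : cell lam mu) : R := (x d)%:R.
pose k : R := 2 / n%:R ^+ 2.
rewrite PapplyE // (sum_Poff_moves part xT (@is_move_entry_exp _ _ _ R x i j m)).
(* Poff lists every transposition once, as (i1, i2, j1, j2) with i1 < i2;
   (i2, i1, j2, j1) describes the same move. *)
rewrite (sum_cell_pairs_sym (F := fun i1 i2 j1 j2 =>
    k * ((a + 1) ^+ m - a ^+ m) * (y (i1, j1) * y (i2, j2) * ((i, j) == (i1, j2))%:R)
  + k * ((a - 1) ^+ m - a ^+ m) * (y (i1, j1) * y (i2, j2) * ((i, j) == (i1, j1))%:R)));
  last by move=> i1 i2 j1 j2 _ _; rewrite /k /y /a; ring.
rewrite sum_cell_pairs_lin sum_cell_pairs_gain sum_cell_pairs_loss.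
have rowE i' : \sum_j' y (i', j') = (nth 0%N lam i')%:R by rewrite -natr_sum tables_row_sum.
have colE j' : \sum_i' y (i', j') = (nth 0%N mu j')%:R by rewrite -natr_sum tables_col_sum.
under [S in y (i, j) * S]eq_bigr do rewrite sum_except rowE.
rewrite sumrB !sum_except rowE colE -natr_sum (partition_sum_nth part).
by rewrite /y /k /a /r /c; ring.
Qed.

Lemma entries_inj x U : entries (R := R) x =1 entries U -> x = U.
Proof.
move=> E; apply/ffunP => c; apply/val_inj/eqP; rewrite -(eqr_nat R).
by have := E (enum_rank c); rewrite /entries enum_rankK => ->.
Qed.

End Chain.

Theorem theorem3p1 (R : realFieldType) (n : nat) (lam mu : seq nat) :
  is_partition n lam -> is_partition n mu ->
  (forall (m : nat) (i : 'I_(size lam)) (j : 'I_(size mu)), (0 < m)%N ->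
     exists q : {mpoly R[nvars lam mu]},
       (msize q <= m)%N /\
       forall x : table n lam mu, x \in tables n lam mu ->
         Papply (fun T => (T (i, j) : nat)%:R ^+ m) x
         = (x (i, j) : nat)%:R ^+ m
             * (1 - 2 * m%:R * ((n.+1)%:R - m%:R) / (n%:R ^+ 2))
           + q.@[entries (R:=R) x])
  /\
  (forall (f : table n lam mu -> R) (beta : R),
     (forall x, x \in tables n lam mu -> Papply f x = beta * f x) ->
     exists p : {mpoly R[nvars lam mu]},
       forall x, x \in tables n lam mu -> f x = p.@[entries (R:=R) x]).
Proof.
move=> part _; split => [m i j _ | f beta _].
  pose k : 'I_(nvars lam mu) := enum_rank ((i, j) : cell lam mu).
  pose p : {poly R} := (2 / n%:R ^+ 2) *: drift_poly n%:R (nth 0%N lam i)%:R (nth 0%N mu j)%:R m.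
  exists (mpoly_of_poly k p); split.
    apply: leq_trans (msize_mpoly_of_poly _ _) _.
    exact: leq_trans (size_scale_leq _ _) (size_drift_poly _ _ _ _).
  move=> x xT; rewrite meval_mpoly_of_poly /entries enum_rankK hornerZ horner_drift_poly.
  by rewrite Papply_entry_exp //= -natr1; ring.
have [p pE] := mpoly_interpolation (@entries_inj R n lam mu) f.
by exists p => x _; rewrite pE.
Qed.
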